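(* Let $(G,\mathcal J)$ be a generalized Kähler structure on a Courant algebroid $E$, with associated decomposition $E=E_+\oplus E_-$, and for $e\in E$ write $e_\pm$ for its $E_\pm$-components. Then $$[u,\mathcal Jv]_+-\mathcal J[u,v]_+=0\quad\text{for all }u\in\Gamma(E_-),\ v\in\Gamma(E_+),$$ and $$[u,\mathcal Jv]_--\mathcal J[u,v]_-=0\quad\text{for all }u\in\Gamma(E_+),\ v\in\Gamma(E_-).$$
   Context: A Courant algebroid on $M$ is a real vector bundle $E\to M$ with nondegenerate symmetric bilinear form $\langle\cdot,\cdot\rangle$, an $\mathbb R$-bilinear bracket $[\cdot,\cdot]$ on $\Gamma(E)$ (Dorfman bracket) and bundle map $\pi:E\to TM$ such that for $u,v,w\in\Gamma(E)$, $f\in C^\infty(M)$: $[u,[v,w]]=[[u,v],w]+[v,[u,w]]$; $\pi([u,v])=[\pi(u),\pi(v)]$; $[u,fv]=\pi(u)(f)v+f[u,v]$; $\pi(u)\langle v,w\rangle=\langle[u,v],w\rangle+\langle v,[u,w]\rangle$; $2\langle[u,u],v\rangle=\pi(v)\langle u,u\rangle$. A generalized metric is a subbundle $E_+$ on which $\langle\cdot,\cdot\rangle$ is nondegenerate; $E_-=E_+^\perp$, $G=\langle\cdot,\cdot\rangle|_{E_+}-\langle\cdot,\cdot\rangle|_{E_-}$, $G^{\mathrm{end}}=\pm\mathrm{Id}$ on $E_\pm$. A generalized almost complex structure is a $\langle\cdot,\cdot\rangle$-orthogonal $\mathcal J$ with $\mathcal J^2=-\mathrm{Id}$, integrable if $[\mathcal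 Ju,\mathcal Jv]-[u,v]-\mathcal J([\mathcal Ju,v]+[u,\mathcal Jv])=0$. $(G,\mathcal J)$ is generalized almost Hermitian if $G(\mathcal Ju,\mathcal Jv)=G(u,v)$ (then $\mathcal J$ preserves $E_\pm$), and generalized Kähler if moreover $\mathcal J$ and $G^{\mathrm{end}}\mathcal J$ are integrable. *)

(* Algebraic (section-level) model of a Courant algebroid:
   A plays the role of C^oo(M), V the role of Gamma(E) (an A-module),
   vector fields act on A as derivations via the anchor. *)
From HB Require Import structures.
From mathcomp Require Import all_boot all_order all_algebra.
Set Implicit Arguments. Unset Strict Implicit. Unset Printing Implicit Defensive.
Import GRing.Theory.
Local Open Scope ring_scope.

Definition is_derivation (A : comUnitRingType) (D : A -> A) : Prop :=
  (forall f g, D (f + g) = D f + D g) /\ (forall f g, D (f * g) = D f * g + f * D g).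

(* Courant algebroid on the section module V, with pairing <.,.>, Dorfman
   bracket [.,.] and anchor pi (pi u is the vector field, acting on functions). *)
Record is_courant (A : comUnitRingType) (V : lmodType A)
    (pair : V -> V -> A) (br : V -> V -> V) (anc : V -> A -> A) : Prop := {
  ca_pair_sym : forall u v, pair u v = pair v u;
  ca_pair_lin : forall f u v w, pair (f *: u + v) w = f * pair u w + pair v w;
  ca_pair_nondeg : forall u, (forall w, pair u w = 0) -> u = 0;
  ca_anc_lin : forall f u v g, anc (f *: u + v) g = f * anc u g + anc v g;
  ca_anc_der : forall u, is_derivation (anc u);
  ca_br_addl : forall u v w, br (u + v) w = br u w + br v w;
  ca_br_addr : forall u v w, br u (v + w) = br u v + br u w;
  ca_jacobi : forall u v w, br u (br v w) = br (br u v) w + br v (br u w);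
  ca_anc_hom : forall u v g, anc (br u v) g = anc u (anc v g) - anc v (anc u g);
  ca_leibniz : forall u f v, br u (f *: v) = anc u f *: v + f *: br u v;
  ca_invariance : forall u v w, anc u (pair v w) = pair (br u v) w + pair v (br u w);
  ca_sym_part : forall u v, 2%:R * pair (br u u) v = anc v (pair u u)
}.

(* A generalized metric E_+ is encoded by the projection P : E -> E_+ along
   E_- = E_+^perp; Gamma(E_+) = {v | P v = v}, Gamma(E_-) = {v | P v = 0}. *)
Record gen_metric (A : comUnitRingType) (V : lmodType A)
    (pair : V -> V -> A) (P : V -> V) : Prop := {
  gm_lin : forall f u v, P (f *: u + v) = f *: P u + P v;
  gm_idem : forall u, P (P u) = P u;
  gm_orth : forall u v, pair (P u) (v - P v) = 0
}.

Definition plus_comp (A : comUnitRingType) (V : lmodType A) (P : V -> V) (e : V) : V := P e.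
Definition minus_comp (A : comUnitRingType) (V : lmodType A) (P : V -> V) (e : V) : V := e - P e.

Definition Gmetric (A : comUnitRingType) (V : lmodType A)
    (pair : V -> V -> A) (P : V -> V) (u v : V) : A :=
  pair (plus_comp P u) (plus_comp P v) - pair (minus_comp P u) (minus_comp P v).
Definition Gend (A : comUnitRingType) (V : lmodType A) (P : V -> V) (u : V) : V :=
  plus_comp P u - minus_comp P u.

Record gen_almost_complex (A : comUnitRingType) (V : lmodType A)
    (pair : V -> V -> A) (J : V -> V) : Prop := {
  gc_lin : forall f u v, J (f *: u + v) = f *: J u + J v;
  gc_sq : forall u, J (J u) = - u;
  gc_orth : forall u v, pair (J u) (J v) = pair u v
}.

Definition integrable (A : comUnitRingType) (V : lmodType A)
    (br : V -> V -> V) (J : V -> V) : Prop :=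
  forall u v, br (J u) (J v) - br u v - J (br (J u) v + br u (J v)) = 0.

Definition gen_kahler (A : comUnitRingType) (V : lmodType A)
    (pair : V -> V -> A) (br : V -> V -> V) (P : V -> V) (J : V -> V) : Prop :=
  [/\ gen_metric pair P, gen_almost_complex pair J,
      (forall u v, Gmetric pair P (J u) (J v) = Gmetric pair P u v),
      integrable br J & integrable br (fun u => Gend P (J u))].

(* Both structures J and K := G J are integrable.  For u in E_- and v in E_+
   we have K u = - J u and K v = J v, so adding the two Nijenhuis identities
   kills the term [J u, J v], and in what remains J + K = 2 P J and
   J - K = 2 (1 - P) J.  Projecting onto E_+ gives 2 (P [u, v] + J P [u, J v]) = 0,
   which is the first identity once 2 is cancelled and J is applied; this needs
   P J = J P, which follows from G-orthogonality of J.  The second identity is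
   the same computation for the projection 1 - P and the structure - G J. *)
From mathcomp Require Import all_boot all_order all_algebra.
Import GRing.Theory.
Set Implicit Arguments. Unset Strict Implicit. Unset Printing Implicit Defensive.
Local Open Scope ring_scope.

Lemma morph0_of_morphD (U W : zmodType) (f : U -> W) :
  {morph f : x y / x + y} -> f 0 = 0.
Proof. by move=> fD; apply: (@addrI _ (f 0)); rewrite -fD !addr0. Qed.

Lemma morphN_of_morphD (U W : zmodType) (f : U -> W) :
  {morph f : x y / x + y} -> {morph f : x / - x}.
Proof.
move=> fD x; apply/eqP; rewrite -addr_eq0 -fD addNr.
by rewrite (morph0_of_morphD fD).
Qed.

Lemma morphD_of_linear (A : comUnitRingType) (V : lmodType A) (f : V -> V) :
  (forall a u v, f (a *: u + v) = a *: f u + f v) -> {morph f : x y / x + y}.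
Proof. by move=> f_lin x y; rewrite -[x]scale1r f_lin !scale1r. Qed.

Lemma mulrn2_eq0 (A : comUnitRingType) (V : lmodType A) (x : V) :
  (2%:R : A) \is a GRing.unit -> x *+ 2 = 0 -> x = 0.
Proof.
move=> two_unit /(congr1 (fun y => (2%:R : A)^-1 *: y)).
by rewrite -scaler_nat scalerA mulVr // scale1r scaler0.
Qed.

Lemma add_relations_mulrn2 (W : zmodType) (a b c d : W) :
  a - b - (c + d) = 0 -> - a - b - (- c + d) = 0 -> (b + d) *+ 2 = 0.
Proof.
move=> e1 e2; apply/eqP; rewrite -oppr_eq0 -[0]addr0 -{1}e1 -e2; apply/eqP.
rewrite mulr2n !opprD !opprK [RHS]addrACA (addrACA a) (addrACA (- c)).
by rewrite addrN addNr !add0r addrACA.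
Qed.

Section Integrability.
Variables (A : comUnitRingType) (V : lmodType A) (br : V -> V -> V).
Hypotheses (br_addl : forall u v w, br (u + v) w = br u w + br v w)
           (br_addr : forall u v w, br u (v + w) = br u v + br u w).

Lemma br_oppl v : {morph br^~ v : u / - u}.
Proof. exact: morphN_of_morphD. Qed.

Lemma br_oppr u : {morph br u : v / - v}.
Proof. exact: morphN_of_morphD. Qed.

Lemma integrable_opp (K : V -> V) : {morph K : x y / x + y} ->
  integrable br K -> integrable br (fun x => - K x).
Proof.
move=> K_add intK u v; rewrite br_oppl br_oppr opprK br_oppl br_oppr.
by rewrite -opprD (morphN_of_morphD K_add) !opprK intK.
Qed.

Variables (J K Q : V -> V).
Hypotheses (J_add : {morph J : x y / x + y}) (K_add : {morph K : x y / x + y})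
           (Q_add : {morph Q : x y / x + y}).
Hypotheses (JJ : forall x, J (J x) = - x)
           (intJ : integrable br J) (intK : integrable br K)
           (QK : forall x, Q (K x) = Q (J x)) (QJ : forall x, Q (J x) = J (Q x)).

(* K = G J, Q = P for the first identity; K = - G J, Q = 1 - P for the second. *)
Lemma proj_br_J (u v : V) : (2%:R : A) \is a GRing.unit ->
  K u = - J u -> K v = J v -> Q (br u (J v)) = J (Q (br u v)).
Proof.
move=> two_unit Ku Kv.
have QN := morphN_of_morphD Q_add; have JN := morphN_of_morphD J_add.
have KN := morphN_of_morphD K_add.
have e1 := congr1 Q (intJ u v); have e2 := congr1 Q (intK u v).
rewrite (morph0_of_morphD Q_add) !(Q_add, QN, QJ, J_add) in e1.
rewrite Ku Kv !br_oppl (morph0_of_morphD Q_add) in e2.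
rewrite !(Q_add, QN, K_add, KN, QK, QJ, J_add, JN) in e2.
have /eqP := mulrn2_eq0 two_unit (add_relations_mulrn2 e1 e2).
by rewrite addr_eq0 => /eqP ->; rewrite JN JJ opprK.
Qed.

End Integrability.

Section GeneralizedMetric.
Variables (A : comUnitRingType) (V : lmodType A) (pair : V -> V -> A) (P : V -> V).
Hypothesis hP : gen_metric pair P.

Let P_add : {morph P : x y / x + y}.
Proof. exact: morphD_of_linear (gm_lin hP). Qed.

Lemma GendE u : Gend P u = P u *+ 2 - u.
Proof. by rewrite /Gend /plus_comp /minus_comp opprB addrA mulr2n. Qed.

Lemma Gend_add : {morph Gend P : x y / x + y}.
Proof. by move=> x y; rewrite !GendE P_add mulrnDl opprD addrACA. Qed.

Lemma minus_comp_add : {morph minus_comp P : x y / x + y}.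
Proof. by move=> x y; rewrite /minus_comp P_add opprD addrACA. Qed.

Lemma P_Gend u : P (Gend P u) = P u.
Proof.
rewrite /Gend /plus_comp /minus_comp !(P_add, morphN_of_morphD P_add).
by rewrite (gm_idem hP) subrr subr0.
Qed.

Lemma minus_comp_Gend u : minus_comp P (Gend P u) = - minus_comp P u.
Proof. by rewrite {1}/minus_comp P_Gend /Gend /plus_comp opprB addrAC subrr add0r. Qed.

Lemma Gend_plus u : P u = u -> Gend P u = u.
Proof. by rewrite /Gend /plus_comp /minus_comp => ->; rewrite subrr subr0. Qed.

Lemma Gend_minus u : P u = 0 -> Gend P u = - u.
Proof. by rewrite /Gend /plus_comp /minus_comp => ->; rewrite sub0r subr0. Qed.

Hypotheses (pair_sym : forall u v, pair u v = pair v u)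
           (pair_lin : forall f u v w, pair (f *: u + v) w = f * pair u w + pair v w).

Let pair_addl w : {morph pair^~ w : u v / u + v}.
Proof. by move=> u v /=; rewrite -[u]scale1r pair_lin mul1r scale1r. Qed.

Let pair_addr u : {morph pair u : v w / v + w}.
Proof. by move=> v w /=; rewrite !(pair_sym u) pair_addl. Qed.

Lemma pair_Gend u v : pair (Gend P u) v = Gmetric pair P u v.
Proof.
have pair_oppr w : {morph pair w : v / - v} := morphN_of_morphD (pair_addr w).
have orthP x y : pair (P x) y = pair (P x) (P y).
  by apply/eqP; rewrite -subr_eq0 -pair_oppr -pair_addr (gm_orth hP).
have orthM x y : pair (x - P x) y = pair (x - P x) (y - P y).
  by rewrite pair_addr pair_oppr [pair _ (P y)]pair_sym (gm_orth hP) subr0.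
by rewrite /Gend /Gmetric /plus_comp /minus_comp pair_addl
   (morphN_of_morphD (pair_addl v)) orthP orthM.
Qed.

Variable J : V -> V.
Hypotheses (pair_nondeg : forall u, (forall w, pair u w = 0) -> u = 0)
           (hJ : gen_almost_complex pair J)
           (J_Gorth : forall u v, Gmetric pair P (J u) (J v) = Gmetric pair P u v).

Let J_add : {morph J : x y / x + y}.
Proof. exact: morphD_of_linear (gc_lin hJ). Qed.

Lemma Gend_J u : Gend P (J u) = J (Gend P u).
Proof.
apply/eqP; rewrite -subr_eq0; apply/eqP; apply: pair_nondeg => w.
have -> : w = J (- J w) by rewrite (morphN_of_morphD J_add) (gc_sq hJ) opprK.
rewrite pair_addl (morphN_of_morphD (pair_addl _)) (gc_orth hJ).
by rewrite !pair_Gend J_Gorth subrr.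
Qed.

Hypothesis two_unit : (2%:R : A) \is a GRing.unit.

Lemma P_J u : P (J u) = J (P u).
Proof.
have twice_P x : P x *+ 2 = Gend P x + x by rewrite GendE subrK.
apply/eqP; rewrite -subr_eq0; apply/eqP; apply: (mulrn2_eq0 two_unit).
by rewrite mulrnBl twice_P Gend_J -J_add -twice_P !mulr2n J_add subrr.
Qed.

Lemma minus_comp_J u : minus_comp P (J u) = J (minus_comp P u).
Proof. by rewrite /minus_comp P_J J_add (morphN_of_morphD J_add). Qed.

End GeneralizedMetric.

Theorem lemma5p1 (A : comUnitRingType) (V : lmodType A)
    (pair : V -> V -> A) (br : V -> V -> V) (anc : V -> A -> A)
    (P : V -> V) (J : V -> V) :
  (2%:R : A) \is a GRing.unit ->
  is_courant pair br anc ->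
  gen_kahler pair br P J ->
  (forall u v, P u = 0 -> P v = v ->
     plus_comp P (br u (J v)) - J (plus_comp P (br u v)) = 0) /\
  (forall u v, P u = u -> P v = 0 ->
     minus_comp P (br u (J v)) - J (minus_comp P (br u v)) = 0).
Proof.
move=> two_unit [sym lin nondeg _ _ br_addl br_addr _ _ _ _ _] [hP hJ J_Gorth intJ intGJ].
have J_add := morphD_of_linear (gc_lin hJ).
have GJ_add : {morph (fun x => Gend P (J x)) : x y / x + y}.
  by move=> x y; rewrite /= J_add (Gend_add hP).
have PJ := P_J hP sym lin nondeg hJ J_Gorth two_unit.
have J0 := morph0_of_morphD J_add.
split=> u v Pu Pv; apply/eqP; rewrite subr_eq0; apply/eqP.
- apply: (proj_br_J br_addl J_add GJ_add (morphD_of_linear (gm_lin hP))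
    (gc_sq hJ) intJ intGJ) => //.
  + by move=> x; rewrite /plus_comp (P_Gend hP).
  + by rewrite Gend_minus // PJ Pu J0.
  + by rewrite Gend_plus // PJ Pv.
- have NGJ_add : {morph (fun x => - Gend P (J x)) : x y / x + y}.
    by move=> x y; rewrite GJ_add opprD.
  apply: (proj_br_J br_addl J_add NGJ_add (minus_comp_add hP)
    (gc_sq hJ) intJ (integrable_opp br_addl br_addr GJ_add intGJ)) => //.
  + by move=> x; rewrite (morphN_of_morphD (minus_comp_add hP)) (minus_comp_Gend hP) opprK.
  + exact: (minus_comp_J hP sym lin nondeg hJ J_Gorth two_unit).
  + by rewrite Gend_plus ?PJ ?Pu // opprK.
  + by rewrite Gend_minus ?PJ ?Pv ?J0 // opprK.
Qed.
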